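(* There is $C=C(\delta)<\infty$ such that the following holds in the setting described in the context: for any $i\in[k]$ there exists a set $V_i'\subseteq V_i$ with $|V_i'|\ge\delta^4n/80$ such that for every $v\in V_i'$, the random walk on $G^\rho$ started at $v$ satisfies \[ \Pr_v(\tau_\rho<\tau_{V\setminus V_i})\ge 1-C\varepsilon^2 . \]
   Context: Setting: $\delta\in(0,1]$, $\varepsilon>0$, $G=(V,E)$ is a connected simple graph on $n$ vertices with minimal degree at least $\delta n$, and $V=V_1\sqcup\dots\sqcup V_k$ is an $(\varepsilon,\delta,n^{1.5})$-good decomposition with parameter $\theta$; moreover $\sqrt n>1/(\theta\varepsilon^8)$. Here, writing $\deg(v,U)$ for the number of edges from $v$ to $U$ and $E(A,B)$ for edges between $A,B$, an $(\varepsilon,\delta,\beta)$-good decomposition with parameter $\theta\in[\varepsilon^{11\cdot2^{2/\delta}},\varepsilon]$ means: $k\le2/\delta$; $|V_i|\ge\delta n/2$; the spectral gap ($1-\lambda_2$ of the simple random walk transition matrix) of the induced graph $G[V_i]$ is at least $\frac{\delta^{15}\theta\beta}{2^{31}n^2}$; $\deg(v,V_i)\ge\delta^4n/40$ for $v\in V_i$; $|E(V_i,V\setminus V_i)|\le\varepsilon^9\theta^2\beta$, for all $i$. $G^\rho$ is the network obtained from $G$ (edges of weight 1) by adding a vertex $\rho$ joined to every $v\in V$ by an edge of weight $w(v,\rho)=\frac{\theta\varepsilon^4\deg_G(v)}{\sqrt n-\theta\varepsilon^4}$; the random walk moves along edges with probability proportional to their weights. For a set $A$, $\tau_A$ is the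 hitting time of $A$, and $\tau_\rho=\tau_{\{\rho\}}$. *)

From HB Require Import structures.
From mathcomp Require Import all_boot all_order all_algebra.
From mathcomp Require Import all_classical all_reals all_analysis.
From mathcomp Require Import Rstruct Rstruct_topology.
Set Implicit Arguments. Unset Strict Implicit. Unset Printing Implicit Defensive.
From Stdlib Require Rdefinitions.
Notation R := Rdefinitions.R.
Import Order.TTheory GRing.Theory Num.Theory.
Local Open Scope ring_scope.

Section GraphDefs.
Variables (V : finType) (e : rel V).

Definition simple_graph : Prop := symmetric e /\ irreflexive e.
Definition connected_graph : Prop := forall x y : V, connect e x y.

Definition degU (v : V) (U : {set V}) : nat := #|[set u in U | e v u]|.
Definition deg (v : V) : nat := #|[set u | e v u]|.
Definition cut_size (A : {set V}) : nat :=
  #|[set p : V * V | [&& p.1 \in A, p.2 \notin A & e p.1 p.2]]|.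

Definition srw_induced (A : {set V}) : 'M[R]_#|A| :=
  \matrix_(i, j) ((e (enum_val i) (enum_val j))%:R / (degU (enum_val i) A)%:R).
End GraphDefs.

(* "the spectral gap 1 - lambda_2 of P is at least g":
   with s the list of eigenvalues of P counted with multiplicity (the roots of
   the characteristic polynomial), at most one eigenvalue exceeds 1 - g,
   i.e. lambda_2 <= 1 - g. *)
Definition spectral_gap_ge (m : nat) (P : 'M[R]_m) (g : R) : Prop :=
  exists s : seq R, char_poly P = \prod_(r <- s) ('X - r%:P) /\
                    (count (fun r : R => (1 - g < r)%R) s <= 1)%N.

Definition good_decomposition (V : finType) (e : rel V) (k : nat) (part : V -> 'I_k)
    (eps delta beta theta : R) : Prop :=
  let n := #|V| in
  [/\ eps `^ (11 * 2 `^ (2 / delta)) <= theta /\ theta <= eps,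
      k%:R <= 2 / delta &
      forall i : 'I_k, let Vi := [set v | part v == i] in
      [/\ delta * n%:R / 2 <= (#|Vi|)%:R,
          spectral_gap_ge (srw_induced e Vi)
             (delta ^+ 15 * theta * beta / (2 ^+ 31 * n%:R ^+ 2)),
          forall v, v \in Vi -> delta ^+ 4 * n%:R / 40 <= (degU e v Vi)%:R &
          (cut_size e Vi)%:R <= eps ^+ 9 * theta ^+ 2 * beta]].

(* The network G^rho on state space option V (None = rho). *)
Section Network.
Variables (V : finType) (e : rel V) (theta eps : R).
Definition rho_weight (v : V) : R :=
  theta * eps ^+ 4 * (deg e v)%:R / (Num.sqrt (#|V|%:R) - theta * eps ^+ 4).
Definition Grho_weight (x y : option V) : R :=
  match x, y with
  | Some u, Some v => (e u v)%:R
  | Some u, None => rho_weight u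
  | None, Some v => rho_weight v
  | None, None => 0
  end.
Definition Grho_trans (x y : option V) : R :=
  Grho_weight x y / \sum_(z : option V) Grho_weight x z.
End Network.

(* Hitting probabilities of a Markov chain with transition kernel Q on a finite
   state space S, started at v, where hitting times count from time 0. *)
Section Hitting.
Variables (S : finType) (Q : S -> S -> R).

Definition path_prob (t : nat) (x : {ffun 'I_t.+1 -> S}) : R :=
  \prod_(j < t) Q (x (widen_ord (leqnSn t) j)) (x (lift ord0 j)).

(* Pr_v(tau_a = t and X_s \notin B for all s < t) *)
Definition hit_at (a : S) (B : {set S}) (v : S) (t : nat) : R :=
  \sum_(x : {ffun 'I_t.+1 -> S} |
          [&& x ord0 == v, x ord_max == a &
              [forall j : 'I_t.+1, (j < t)%N ==> (x j \notin B) && (x j != a)]])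
    path_prob x.

Definition hit_before (a : S) (B : {set S}) (v : S) : R :=
  limn (series (hit_at a B v)).
End Hitting.

From HB Require Import structures.
From mathcomp Require Import all_boot all_order all_algebra.
From mathcomp Require Import all_classical all_reals all_analysis.
From mathcomp Require Import Rstruct Rstruct_topology.
From mathcomp Require Import ring lra.
Import Order.TTheory GRing.Theory Num.Theory.
Set Implicit Arguments. Unset Strict Implicit. Unset Printing Implicit Defensive.
Local Open Scope ring_scope.

(** From a vertex of [V_i] the walk on [G^rho] jumps to [rho] with the same
    probability [p = theta eps^4 / sqrt n] at every step.  Let [h_T u] be the
    probability of reaching [rho] within [T] steps without leaving [V_i], and
    let [F_T = \sum_(u in V_i) deg u * (1 - h_T u)].  One step of the walk and
    the symmetry of the edge weights give
    [F_(T+1) <= (1 - p) (F_T + |E(V_i, V \ V_i)|)], hence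
    [F_T <= (1 - p)^T n^2 + |E(V_i, V \ V_i)| / p], which is at most
    [2 eps^6 n^2] for large [T] by the cut bound of the good decomposition.
    All degrees are at least [delta n], so by Markov's inequality at most
    [delta n / 4] vertices of [V_i] have [1 - h_T u >= 8 eps^2 / delta^2]; the
    others form [V_i'], and [h_T] is a lower bound for the hitting probability. *)

Lemma exists_expr_le (q x : R) : 0 <= q -> q < 1 -> 0 < x -> exists T : nat, q ^+ T <= x.
Proof.
move=> q_ge0 q_lt1 x_gt0; have q_norm : `|q| < 1 by rewrite ger0_norm.
have [T _ HT] := @cvgr0_norm_le R R^o _ _ _ (GRing.exp q) (cvg_expr q_norm) x x_gt0.
by exists T; move: (HT T (leqnn T)); rewrite /= ger0_norm ?exprn_ge0.
Qed.

Lemma powR_le_self_le1 (x a : R) : 0 < x -> 1 < a -> x `^ a <= x -> x <= 1.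
Proof.
move=> x_gt0 a_gt1; apply: contraTT; rewrite -!ltNge => x_gt1.
by rewrite -{1}[x]lnK ?posrE // /powR gt_eqF // ltr_expR ltr_pMl // ln_gt0.
Qed.

Lemma powR_3half (x : R) : 0 <= x -> x `^ (3 / 2) = x * Num.sqrt x.
Proof.
move=> x_ge0; have -> : (3 / 2 : R) = 1 + 2^-1 by field.
by rewrite powRD ?powRr1 ?powR12_sqrt // implybE gt_eqF ?addr_gt0 ?invr_gt0.
Qed.

Lemma good_theta_bounds (delta eps theta : R) :
  0 < delta -> 0 < eps -> eps `^ (11 * 2 `^ (2 / delta)) <= theta -> theta <= eps ->
  0 < theta /\ eps <= 1.
Proof.
move=> delta_gt0 eps_gt0 theta_ge theta_le; split.
  by apply: lt_le_trans theta_ge; apply: powR_gt0.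
apply: (powR_le_self_le1 eps_gt0 _ (le_trans theta_ge theta_le)).
have : 1 <= 2 `^ (2 / delta).
  by rewrite -{1}(powRr0 2); apply: ler_powR; rewrite ?ler1n // divr_ge0 // ltW.
lra.
Qed.

Lemma rate_lt_of_inv_lt (theta eps x : R) :
  0 < theta -> theta <= 1 -> 0 < eps -> eps <= 1 ->
  1 / (theta * eps ^+ 8) < x -> theta * eps ^+ 4 < x.
Proof.
move=> theta_gt0 theta_le1 eps_gt0 eps_le1; apply: le_lt_trans.
have rate_le1 m : theta * eps ^+ m <= 1.
  by apply: mulr_ile1; rewrite ?exprn_ge0 ?exprn_ile1 ?(ltW theta_gt0) ?(ltW eps_gt0).
have rate8_gt0 : 0 < theta * eps ^+ 8 by rewrite mulr_gt0 ?exprn_gt0.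
by apply: le_trans (rate_le1 4) _; rewrite ler_pdivlMr // mul1r.
Qed.

Lemma big_option (T : finType) (F : option T -> R) :
  \sum_z F z = F None + \sum_v F (Some v).
Proof.
rewrite (bigD1 None) //= (reindex_omap Some id) => [|[]//].
by under eq_bigl do rewrite eqxx.
Qed.

Lemma card_ge_mul_le_sum (T : finType) (A : {set T}) (d g : T -> R) (D c : R) :
  0 <= D -> 0 <= c ->
  (forall u, u \in A -> D <= d u) -> (forall u, u \in A -> 0 <= g u) ->
  #|[set u in A | c <= g u]|%:R * (D * c) <= \sum_(u in A) d u * g u.
Proof.
move=> D0 c0 dA gA.
rewrite (bigID (fun u => c <= g u)) /= -[leLHS]addr0 lerD //; last first.
  apply: sumr_ge0 => u /andP[uA _].
  by apply: mulr_ge0; [exact: le_trans D0 (dA u uA) | exact: gA].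
rewrite -sumr_const mulr_suml.
rewrite [leLHS](eq_bigl (fun u => (u \in A) && (c <= g u))) => [|u]; last by rewrite inE.
by apply: ler_sum => u /andP[uA cg]; rewrite mul1r ler_pM ?dA.
Qed.

Section FirstStepDecomposition.
Variables (S : finType) (Q : S -> S -> R) (a : S) (B : {set S}).

Definition ffun_cons n (s : S) (y : {ffun 'I_n -> S}) : {ffun 'I_n.+1 -> S} :=
  [ffun j => if unlift ord0 j is Some k then y k else s].
Definition ffun_behead n (x : {ffun 'I_n.+1 -> S}) : {ffun 'I_n -> S} :=
  [ffun k => x (lift ord0 k)].

Lemma ffun_cons0 n s (y : {ffun 'I_n -> S}) : ffun_cons s y ord0 = s.
Proof. by rewrite ffunE unlift_none. Qed.

Lemma ffun_consS n s (y : {ffun 'I_n -> S}) k : ffun_cons s y (lift ord0 k) = y k.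
Proof. by rewrite ffunE liftK. Qed.

Lemma ffun_consK n s (y : {ffun 'I_n -> S}) : ffun_behead (ffun_cons s y) = y.
Proof. by apply/ffunP => k; rewrite ffunE ffun_consS. Qed.

Lemma ffun_beheadK n (x : {ffun 'I_n.+1 -> S}) : ffun_cons (x ord0) (ffun_behead x) = x.
Proof. by apply/ffunP => j; rewrite ffunE; case: unliftP => [k ->|->]; rewrite ?ffunE. Qed.

Lemma path_prob_cons t s (y : {ffun 'I_t.+1 -> S}) :
  path_prob Q (ffun_cons s y) = Q s (y ord0) * path_prob Q y.
Proof.
rewrite /path_prob big_ord_recl.
have -> : widen_ord (leqnSn t.+1) ord0 = ord0 by apply: val_inj.
rewrite ffun_cons0 ffun_consS; congr (_ * _); apply: eq_bigr => j _.
have -> : widen_ord (leqnSn t.+1) (lift ord0 j) = lift ord0 (widen_ord (leqnSn t) j).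
  exact: val_inj.
by rewrite !ffun_consS.
Qed.

Lemma forall_before_cons t (P : pred S) s (y : {ffun 'I_t.+1 -> S}) :
  [forall j : 'I_t.+2, (j < t.+1)%N ==> P (ffun_cons s y j)] =
  P s && [forall k : 'I_t.+1, (k < t)%N ==> P (y k)].
Proof.
apply/forallP/andP => [H | [Ps /forallP H] j].
  split; first by have := H ord0; rewrite ffun_cons0.
  by apply/forallP => k; have := H (lift ord0 k); rewrite ffun_consS.
case: (unliftP ord0 j) => [k ->|->]; last by rewrite ffun_cons0 Ps implybT.
by rewrite ffun_consS; apply: H.
Qed.

Lemma hit_at0 v : hit_at Q a B v 0 = (v == a)%:R.
Proof.
have const_a (x : {ffun 'I_1 -> S}) : (x ord0 == a) = (x == [ffun => a]).
  apply/eqP/eqP => [xa|-> //]; last by rewrite ffunE.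
  by apply/ffunP => j; rewrite ord1 ffunE.
rewrite /hit_at (eq_bigl (fun x => (v == a) && (x == [ffun => a]))) => [|x].
  by case: eqP => _; [rewrite big_pred1_eq /path_prob big_ord0 | rewrite big_pred0].
have -> : (ord_max : 'I_1) = ord0 by exact: val_inj.
have -> : [forall j : 'I_1, (j < 0)%N ==> (x j \notin B) && (x j != a)] by apply/forallP.
rewrite andbT const_a.
by case: (x =P [ffun=> a]) => [->|]; rewrite ?andbF // ffunE eq_sym andbT.
Qed.

Lemma hit_atS v t :
  hit_at Q a B v t.+1 =
  if (v \notin B) && (v != a) then \sum_y Q v y * hit_at Q a B y t else 0.
Proof.
rewrite /hit_at (reindex_onto (ffun_cons v) (@ffun_behead t.+1)); last first.
  by move=> x /andP[/eqP <- _]; rewrite ffun_beheadK.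
have -> : (ord_max : 'I_t.+2) = lift ord0 ord_max by exact: val_inj.
under eq_bigl => y.
  rewrite ffun_cons0 ffun_consS ffun_consK !eqxx andbT.
  rewrite (forall_before_cons (fun z => (z \notin B) && (z != a))) /=.
  over.
under eq_bigr => y _ do rewrite path_prob_cons.
case: ifP => [Pv|_]; last by rewrite big_pred0 // => y; rewrite andbF.
rewrite (partition_big (fun y : {ffun 'I_t.+1 -> S} => y ord0) xpredT) //=.
apply: eq_bigr => u _; rewrite big_distrr /=.
by apply: eq_big => [y|y /andP[_ /eqP ->]] //; rewrite andbC.
Qed.

Lemma sum_hit_at_from_target T : \sum_(t < T.+1) hit_at Q a B a t = 1.
Proof.
by rewrite big_ord_recl hit_at0 eqxx big1 ?addr0 // => t _; rewrite hit_atS eqxx andbF.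
Qed.

Hypothesis Q_ge0 : forall x y, 0 <= Q x y.

Lemma hit_at_ge0 v t : 0 <= hit_at Q a B v t.
Proof. by apply: sumr_ge0 => x _; apply: prodr_ge0 => j _. Qed.

Lemma series_hit_at_le_hit_before v M :
  (forall T, series (hit_at Q a B v) T <= M) ->
  forall T, series (hit_at Q a B v) T <= hit_before Q a B v.
Proof.
move=> ub; have nd : nondecreasing_seq (series (hit_at Q a B v)).
  by apply: nondecreasing_series => t _ _; exact: hit_at_ge0.
apply: nondecreasing_cvgn_le => //; apply: nondecreasing_is_cvgn => //.
by exists M => _ [T _ <-].
Qed.

End FirstStepDecomposition.

Section Absorption.
Variables (V : finType) (E : V -> V -> R) (A : {set V}) (p : R).

Definition wdeg u := \sum_w E u w.

(* [absorb_within T u] is [Pr_u(tau_rho <= T, tau_rho < tau_(V \ A))] for the walk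
   that jumps to an absorbing root with probability [p] and otherwise follows [E]. *)
Fixpoint absorb_within (T : nat) (u : V) : R :=
  if T is T'.+1 then
    if u \in A then p + \sum_w ((1 - p) * E u w / wdeg u) * absorb_within T' w
    else 0
  else 0.

Definition cut_weight := \sum_(u in A) \sum_(w | w \notin A) E u w.

Definition deficiency T := \sum_(u in A) wdeg u * (1 - absorb_within T u).

Lemma absorb_within_out T u : u \notin A -> absorb_within T u = 0.
Proof. by case: T => //= T /negbTE ->. Qed.

Hypothesis E_ge0 : forall u w, 0 <= E u w.
Hypothesis wdeg_gt0 : forall u, 0 < wdeg u.
Hypothesis p_le1 : p <= 1.

Lemma step_weight_ge0 u w : 0 <= (1 - p) * E u w / wdeg u.
Proof. by rewrite !mulr_ge0 ?subr_ge0 ?invr_ge0 ?(ltW (wdeg_gt0 u)). Qed.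

Lemma absorb_within_le1 T u : absorb_within T u <= 1.
Proof.
elim: T u => [|T IH] u /=; first exact: ler01.
case: ifP => _; last exact: ler01.
have step_weights : \sum_w (1 - p) * E u w / wdeg u = 1 - p.
  by rewrite -mulr_suml -mulr_sumr -/(wdeg u) mulfK ?gt_eqF.
have : \sum_w ((1 - p) * E u w / wdeg u) * absorb_within T w <= 1 - p.
  rewrite -[leRHS]step_weights; apply: ler_sum => w _.
  by rewrite ler_piMr ?step_weight_ge0.
lra.
Qed.

Hypothesis E_sym : forall u w, E u w = E w u.

Lemma deficiency_step T : deficiency T.+1 <= (1 - p) * (deficiency T + cut_weight).
Proof.
have step u : u \in A ->
    wdeg u * (1 - absorb_within T.+1 u) =
    (1 - p) * \sum_w E u w * (1 - absorb_within T w).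
  move=> uA; rewrite /= uA.
  have -> : \sum_w ((1 - p) * E u w / wdeg u) * absorb_within T w =
            (1 - p) / wdeg u * \sum_w E u w * absorb_within T w.
    by rewrite mulr_sumr; apply: eq_bigr => w _; ring.
  have -> : \sum_w E u w * (1 - absorb_within T w) =
            wdeg u - \sum_w E u w * absorb_within T w.
    by rewrite /wdeg -sumrB; apply: eq_bigr => w _; ring.
  by field; rewrite gt_eqF.
have split_out u : \sum_w E u w * (1 - absorb_within T w) =
    \sum_(w in A) E u w * (1 - absorb_within T w) + \sum_(w | w \notin A) E u w.
  rewrite (bigID (mem A)) /=; congr (_ + _).
  by apply: eq_bigr => w wA; rewrite absorb_within_out // subr0 mulr1.
rewrite /deficiency (eq_bigr _ step) -mulr_sumr ler_wpM2l ?subr_ge0 //.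
rewrite (eq_bigr _ (fun u _ => split_out u)) big_split /= lerD2r exchange_big /=.
apply: ler_sum => w wA; rewrite -mulr_suml ler_wpM2r ?subr_ge0 ?absorb_within_le1 //.
(* by symmetry, the weight reaching [w] from inside [A] is at most [wdeg w] *)
rewrite /wdeg [leRHS](eq_bigr (fun u => E u w)) => [|u _]; last exact: E_sym.
by rewrite [leRHS](bigID (mem A)) /= lerDl sumr_ge0.
Qed.

Lemma deficiency_le T : 0 < p ->
  deficiency T <= (1 - p) ^+ T * deficiency 0 + cut_weight * (1 - p) / p.
Proof.
move=> p_gt0; have cut_ge0 : 0 <= cut_weight by do 2!apply: sumr_ge0 => ? _.
elim: T => [|T IH].
  by rewrite expr0 mul1r lerDl divr_ge0 ?(ltW p_gt0) // mulr_ge0 // subr_ge0.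
apply: le_trans (deficiency_step T) _.
apply: le_trans (ler_wpM2l _ (lerD IH (lexx cut_weight))) _; first by rewrite subr_ge0.
by rewrite exprS le_eqVlt; apply/orP; left; apply/eqP; field; rewrite gt_eqF.
Qed.

Lemma card_nearly_absorbed_ge (delta eps n : R) T :
  0 < delta -> delta <= 1 -> 0 < eps -> eps <= 1 -> 0 < n ->
  (forall u, u \in A -> delta * n <= wdeg u) -> delta * n / 2 <= #|A|%:R ->
  deficiency T <= 2 * eps ^+ 6 * n ^+ 2 ->
  delta ^+ 4 * n / 80 <=
    #|[set u in A | 1 - 8 / delta ^+ 2 * eps ^+ 2 <= absorb_within T u]|%:R.
Proof.
move=> delta_gt0 delta_le1 eps_gt0 eps_le1 n_gt0 wdeg_ge card_A def_le.
set c := 8 / delta ^+ 2 * eps ^+ 2.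
set good := [set u in A | 1 - c <= absorb_within T u].
set bad := [set u in A | c <= 1 - absorb_within T u].
have card_A_le : (#|A| <= #|good| + #|bad|)%N.
  rewrite -(cardsID good A) leq_add // ?subset_leq_card //; first exact: subsetIr.
  apply/fintype.subsetP => u; rewrite !inE => /andP[notgood uA].
  by move: notgood; rewrite uA /= -ltNge => ?; lra.
have bad_mass : #|bad|%:R * (delta * n * c) <= 2 * eps ^+ 6 * n ^+ 2.
  apply: le_trans def_le; apply: card_ge_mul_le_sum wdeg_ge _.
  - by rewrite mulr_ge0 ?ltW.
  - by rewrite /c mulr_ge0 ?divr_ge0 ?exprn_ge0 ?ltW.
  - by move=> u _; rewrite subr_ge0 absorb_within_le1.
have bad_small : #|bad|%:R <= delta * n / 4.
  have scale_gt0 : 0 < delta * n * c by rewrite /c !mulr_gt0 ?invr_gt0 ?exprn_gt0.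
  rewrite -(ler_pM2r scale_gt0); apply: le_trans bad_mass _.
  have -> : delta * n / 4 * (delta * n * c) = 2 * eps ^+ 2 * n ^+ 2.
    by rewrite /c; field; rewrite gt_eqF.
  have eps4_le1 : eps ^+ 4 <= 1 := exprn_ile1 4 (ltW eps_gt0) eps_le1.
  have -> : 2 * eps ^+ 6 * n ^+ 2 = 2 * eps ^+ 2 * n ^+ 2 * eps ^+ 4 by ring.
  by rewrite ler_piMr // !mulr_ge0 // (ltW eps_gt0, ltW n_gt0).
have delta4_le : delta ^+ 4 <= delta.
  by rewrite -[leRHS]mulr1 exprS ler_wpM2l ?(ltW delta_gt0) // exprn_ile1 ?(ltW delta_gt0).
have : (#|A|%:R : R) <= #|good|%:R + #|bad|%:R by rewrite -natrD ler_nat.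
have : 0 <= delta ^+ 4 * n by rewrite mulr_ge0 ?exprn_ge0 ?ltW.
nra.
Qed.
End Absorption.

Definition outside (V : finType) (A : {set V}) : {set option V} :=
  [set x | if x is Some u then u \notin A else false].

Section AbsorbingChain.
Variables (V : finType) (Q : option V -> option V -> R) (E : V -> V -> R).
Variables (A : {set V}) (p : R).
Hypothesis Q_to_None : forall u, Q (Some u) None = p.
Hypothesis Q_between : forall u w, Q (Some u) (Some w) = (1 - p) * E u w / wdeg E u.

Lemma sum_hit_at_absorb_within T u :
  \sum_(t < T.+1) hit_at Q None (outside A) (Some u) t = absorb_within E A p T u.
Proof.
elim: T u => [|T IH] u; first by rewrite big_ord1 hit_at0.
rewrite big_ord_recl hit_at0 add0r.
under eq_bigr => t _ do rewrite lift0 hit_atS.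
rewrite inE negbK andbT /=; case: ifP => uA; last by rewrite big1.
under eq_bigr => t _ do rewrite big_option.
rewrite big_split /= -mulr_sumr sum_hit_at_from_target mulr1 Q_to_None.
congr (_ + _); rewrite exchange_big; apply: eq_bigr => w _.
by rewrite -mulr_sumr IH Q_between.
Qed.

Hypothesis Q_ge0 : forall x y, 0 <= Q x y.
Hypothesis E_ge0 : forall u w, 0 <= E u w.
Hypothesis wdeg_gt0 : forall u, 0 < wdeg E u.
Hypothesis p_le1 : p <= 1.

Lemma absorb_within_le_hit_before T u :
  absorb_within E A p T u <= hit_before Q None (outside A) (Some u).
Proof.
have partial_sum n :
    series (hit_at Q None (outside A) (Some u)) n.+1 = absorb_within E A p n u.
  by rewrite -sum_hit_at_absorb_within /series /= big_mkord.
rewrite -partial_sum; apply: (series_hit_at_le_hit_before Q_ge0 (M := 1)) => -[|n].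
  by rewrite /series /= big_geq.
by rewrite partial_sum absorb_within_le1.
Qed.

End AbsorbingChain.

Definition edge_weight (V : finType) (e : rel V) (u w : V) : R := (e u w)%:R.

Lemma wdeg_edge_weight (V : finType) (e : rel V) u :
  wdeg (edge_weight e) u = (deg e u)%:R.
Proof.
rewrite /wdeg /edge_weight -natr_sum /deg -sum1_card [in RHS]big_mkcond /=.
by congr _%:R; apply: eq_bigr => w _; rewrite inE; case: (e u w).
Qed.

Lemma cut_weight_edge_weight (V : finType) (e : rel V) (A : {set V}) :
  cut_weight (edge_weight e) A = (cut_size e A)%:R.
Proof.
rewrite /cut_size -sumr_const big_mkcond /=; set S := [set _ | _].
pose F u w : R := if (u, w) \in S then 1 else 0.
rewrite (eq_bigr (fun p => F p.1 p.2)) => [|[] //].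
rewrite -(pair_bigA _ F) /cut_weight big_mkcond /=.
apply: eq_bigr => u _; case uA: (u \in A); last by rewrite big1 // => w _; rewrite /F inE uA.
rewrite big_mkcond; apply: eq_bigr => w _; rewrite /F inE /= uA /edge_weight.
by case: (w \in A); case: (e u w).
Qed.

Lemma deficiency0_edge_weight_le (V : finType) (e : rel V) (A : {set V}) p :
  deficiency (edge_weight e) A p 0 <= #|V|%:R ^+ 2.
Proof.
rewrite /deficiency expr2; apply: (@le_trans _ _ (\sum_(u in A) #|V|%:R)).
  by apply: ler_sum => u _; rewrite /= subr0 mulr1 wdeg_edge_weight ler_nat max_card.
rewrite sumr_const -(mulr_natr (#|V|%:R : R)).
by apply: ler_wpM2l; rewrite ?ler0n ?ler_nat ?max_card.
Qed.

Definition rho_prob (V : finType) (theta eps : R) : R :=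
  theta * eps ^+ 4 / Num.sqrt #|V|%:R.

Section RootedWalk.
Variables (V : finType) (e : rel V) (theta eps : R).
Hypothesis theta_gt0 : 0 < theta.
Hypothesis eps_gt0 : 0 < eps.
Hypothesis rate_lt_sqrt : theta * eps ^+ 4 < Num.sqrt #|V|%:R.
Hypothesis deg_gt0 : forall u, (0 < deg e u)%N.

Local Notation N := (theta * eps ^+ 4).
Local Notation s := (Num.sqrt (#|V|%:R : R)).
Local Notation p := (rho_prob V theta eps).

Let N_gt0 : 0 < N. Proof. by rewrite mulr_gt0 ?exprn_gt0. Qed.
Let s_gt0 : 0 < s. Proof. exact: lt_trans rate_lt_sqrt. Qed.

Lemma rho_prob_gt0 : 0 < p.
Proof. by rewrite divr_gt0. Qed.

Lemma rho_prob_lt1 : p < 1.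
Proof. by rewrite /rho_prob ltr_pdivrMr // mul1r. Qed.

Lemma Grho_total_weight u :
  \sum_z Grho_weight e theta eps (Some u) z = (deg e u)%:R * s / (s - N).
Proof.
rewrite big_option /= -[X in _ + X]/(wdeg (edge_weight e) u) wdeg_edge_weight.
by rewrite /rho_weight; field; rewrite subr_eq0 gt_eqF.
Qed.

Lemma Grho_trans_to_rho u : Grho_trans e theta eps (Some u) None = p.
Proof.
rewrite /Grho_trans Grho_total_weight /= /rho_weight /rho_prob.
by field; rewrite subr_eq0 !gt_eqF ?ltr0n.
Qed.

Lemma Grho_trans_between u w :
  Grho_trans e theta eps (Some u) (Some w) =
  (1 - p) * edge_weight e u w / wdeg (edge_weight e) u.
Proof.
rewrite /Grho_trans Grho_total_weight wdeg_edge_weight /= /rho_prob /edge_weight.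
by field; rewrite subr_eq0 !gt_eqF ?ltr0n.
Qed.

Lemma Grho_trans_ge0 x y : 0 <= Grho_trans e theta eps x y.
Proof.
have weight_ge0 x' y' : 0 <= Grho_weight e theta eps x' y'.
  have s_N : 0 <= s - N by rewrite subr_ge0 ltW.
  by case: x' y' => [u|] [w|] //=;
    apply: divr_ge0 => //; apply: mulr_ge0 (ltW N_gt0) _.
by apply: divr_ge0 => //; apply: sumr_ge0.
Qed.

Lemma Grho_absorb_within_le_hit_before A T u :
  absorb_within (edge_weight e) A p T u <=
  hit_before (Grho_trans e theta eps) None (outside A) (Some u).
Proof.
apply: absorb_within_le_hit_before.
- exact: Grho_trans_to_rho.
- exact: Grho_trans_between.
- exact: Grho_trans_ge0.
- by move=> ? ?; rewrite ler0n.
- by move=> v; rewrite wdeg_edge_weight ltr0n.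
- exact: ltW rho_prob_lt1.
Qed.

Hypothesis e_sym : symmetric e.
Hypothesis theta_le_eps : theta <= eps.

Lemma cut_over_rho_prob_le A :
  (cut_size e A)%:R <= eps ^+ 9 * theta ^+ 2 * #|V|%:R `^ (3 / 2) ->
  cut_weight (edge_weight e) A * (1 - p) / p <= eps ^+ 6 * #|V|%:R ^+ 2.
Proof.
rewrite -cut_weight_edge_weight powR_3half ?ler0n //.
set c := cut_weight _ _ => cut_le.
have c_ge0 : 0 <= c by rewrite /c cut_weight_edge_weight ler0n.
have p_gt0 := rho_prob_gt0.
have ss : s * s = #|V|%:R by rewrite -expr2 sqr_sqrtr ?ler0n.
apply: (@le_trans _ _ (c / p)).
  apply: ler_wpM2r; first by rewrite invr_ge0 (ltW p_gt0).
  by apply: ler_piMr => //; rewrite gerBl ltW.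
have -> : c / p = c * s / N by rewrite /rho_prob; field; rewrite !gt_eqF.
apply: (@le_trans _ _ (eps ^+ 9 * theta ^+ 2 * (#|V|%:R * s) * s / N)).
  apply: ler_wpM2r; first by rewrite invr_ge0 (ltW N_gt0).
  by apply: ler_wpM2r; rewrite ?(ltW s_gt0).
have -> : eps ^+ 9 * theta ^+ 2 * (#|V|%:R * s) * s / N =
          theta * eps ^+ 5 * #|V|%:R ^+ 2.
  by move: ss; move: (s) => s' <-; field; rewrite !gt_eqF.
apply: ler_wpM2r; first by rewrite exprn_ge0 ?ler0n.
by rewrite (exprSr eps 5) mulrC; apply: ler_wpM2l; rewrite ?exprn_ge0 ?(ltW eps_gt0).
Qed.

Lemma deficiency_small A :
  (cut_size e A)%:R <= eps ^+ 9 * theta ^+ 2 * #|V|%:R `^ (3 / 2) ->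
  exists T, deficiency (edge_weight e) A p T <= 2 * eps ^+ 6 * #|V|%:R ^+ 2.
Proof.
move=> cut_le; have p_gt0 := rho_prob_gt0; have p_lt1 := rho_prob_lt1.
have [T decay] : exists T, (1 - p) ^+ T <= eps ^+ 6.
  by apply: exists_expr_le; rewrite ?subr_ge0 ?ltW ?gtrBl ?exprn_gt0.
exists T.
have E_ge0 u w : 0 <= edge_weight e u w by exact: ler0n.
have wdeg_gt0 u : 0 < wdeg (edge_weight e) u by rewrite wdeg_edge_weight ltr0n.
have E_sym u w : edge_weight e u w = edge_weight e w u by rewrite /edge_weight e_sym.
have := deficiency_le A E_ge0 wdeg_gt0 (ltW p_lt1) E_sym T p_gt0.
have := cut_over_rho_prob_le cut_le.
have def0_ge0 : 0 <= deficiency (edge_weight e) A p 0.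
  by apply: sumr_ge0 => u _; rewrite /= subr0 mulr1 wdeg_edge_weight ler0n.
have q_ge0 : 0 <= 1 - p by rewrite subr_ge0 ltW.
have := ler_pM (exprn_ge0 T q_ge0) def0_ge0 decay (deficiency0_edge_weight_le e A p).
lra.
Qed.

End RootedWalk.

Theorem claim3p6 :
  forall delta : R, 0 < delta -> delta <= 1 ->
  exists C : R,
  forall (eps : R), 0 < eps ->
  forall (V : finType) (e : rel V) (k : nat) (part : V -> 'I_k) (theta : R),
    simple_graph e -> connected_graph e ->
    (forall v : V, delta * #|V|%:R <= (deg e v)%:R) ->
    good_decomposition e part eps delta (#|V|%:R `^ (3 / 2)) theta ->
    1 / (theta * eps ^+ 8) < Num.sqrt (#|V|%:R) ->
    forall i : 'I_k,
    exists Vi' : {set V},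
      [/\ Vi' \subset [set v | part v == i],
          delta ^+ 4 * #|V|%:R / 80 <= (#|Vi'|)%:R &
          forall v : V, v \in Vi' ->
            1 - C * eps ^+ 2 <=
            hit_before (Grho_trans e theta eps) None
              [set x : option V | if x is Some u then part u != i else false]
              (Some v)].
Proof.
move=> delta delta_gt0 delta_le1; exists (8 / delta ^+ 2).
move=> eps eps_gt0 V e k part theta [e_sym _] _ deg_ge [[theta_ge theta_le] _ good] inv_lt i.
have [A_ge _ _ cut_le] := good i; set A := [set v | part v == i] in A_ge cut_le *.
have [theta_gt0 eps_le1] := good_theta_bounds delta_gt0 eps_gt0 theta_ge theta_le.
have rate_lt := rate_lt_of_inv_lt theta_gt0 (le_trans theta_le eps_le1) eps_gt0 eps_le1 inv_lt.
have n_gt0 : 0 < #|V|%:R :> R by rewrite -sqrtr_gt0 (lt_trans _ rate_lt) ?mulr_gt0 ?exprn_gt0.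
have deg_gt0 u : (0 < deg e u)%N by rewrite -(ltr0n R) (lt_le_trans _ (deg_ge u)) ?mulr_gt0.
have [T def_le] := deficiency_small theta_gt0 eps_gt0 rate_lt deg_gt0 e_sym theta_le cut_le.
set h := absorb_within (edge_weight e) A (rho_prob V theta eps) T.
exists [set u in A | 1 - 8 / delta ^+ 2 * eps ^+ 2 <= h u]; split.
- by apply/fintype.subsetP => u; rewrite inE => /andP[].
- apply: card_nearly_absorbed_ge def_le => //.
  + by move=> u; rewrite wdeg_edge_weight ltr0n.
  + exact: ltW (rho_prob_lt1 theta_gt0 eps_gt0 rate_lt).
  + by move=> u _; rewrite wdeg_edge_weight.
- have -> : [set x : option V | if x is Some u then part u != i else false] = outside A.
    by apply/setP => -[u|]; rewrite !inE.
  move=> v; rewrite inE => /andP[_ absorbed]; apply: le_trans absorbed _.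
  exact: Grho_absorb_within_le_hit_before.
Qed.
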